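(* For each order function $g$ there exists an order function $h$ such that every $\mathrm{DNR}_g$ function Turing-computes an $\mathrm{SNPR}_h$ function.
   Context: $\varphi_e$ denotes the $e$-th partial recursive function. A function $f:\omega\to\omega$ is DNR if $f(e)\neq\varphi_e(e)$ for every $e$ such that $\varphi_e(e)$ is defined. A function $f:\omega\to\omega$ is SNPR (strongly non-partial-recursive) if for every partial recursive function $\psi$, for all but finitely many $n$, if $\psi(n)$ is defined then $f(n)\neq\psi(n)$. An order function is a recursive, nondecreasing, unbounded function $h:\omega\to\omega$ with $h(0)\ge 2$. For a class $\mathrm{C}$ of functions and an order function $h$, $\mathrm{C}_h$ denotes the members of $\mathrm{C}$ bounded by $h$ (i.e., $f(n)<h(n)$ for all $n$). *)

From Stdlib Require Import Arith Cantor.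

Definition pr (x y : nat) : nat := Cantor.to_nat (x, y).
Definition p1 (n : nat) : nat := fst (Cantor.of_nat n).
Definition p2 (n : nat) : nat := snd (Cantor.of_nat n).

(* Unary mu-recursive function codes (on nat, arguments packed by pairing),
   with an extra oracle-query instruction. *)
Inductive code : Type :=
| cZero
| cSucc
| cFst
| cSnd
| cPair (f g : code)
| cComp (f g : code)
| cRec (f g : code)
| cMin (f : code)
| cOracle.

Inductive eval (O : nat -> nat) : code -> nat -> nat -> Prop :=
| eZero x : eval O cZero x 0
| eSucc x : eval O cSucc x (S x)
| eFst x : eval O cFst x (p1 x)
| eSnd x : eval O cSnd x (p2 x)
| ePair f g x a b : eval O f x a -> eval O g x b -> eval O (cPair f g) x (pr a b)
| eComp f g x y z : eval O g x y -> eval O f y z -> eval O (cComp f g) x z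
| eRec0 f g x y : eval O f x y -> eval O (cRec f g) (pr x 0) y
| eRecS f g x n a y :
    eval O (cRec f g) (pr x n) a -> eval O g (pr x (pr n a)) y ->
    eval O (cRec f g) (pr x (S n)) y
| eMin f x y :
    eval O f (pr x y) 0 ->
    (forall z, z < y -> exists w, w <> 0 /\ eval O f (pr x z) w) ->
    eval O (cMin f) x y
| eOracle x : eval O cOracle x (O x).

Fixpoint decode_aux (fuel n : nat) : code :=
  match fuel with
  | 0 => cZero
  | S k =>
    let m := n / 9 in
    match n mod 9 with
    | 0 => cZero
    | 1 => cSucc
    | 2 => cFst
    | 3 => cSnd
    | 4 => cPair (decode_aux k (p1 m)) (decode_aux k (p2 m))
    | 5 => cComp (decode_aux k (p1 m)) (decode_aux k (p2 m))
    | 6 => cRec (decode_aux k (p1 m)) (decode_aux k (p2 m))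
    | 7 => cMin (decode_aux k m)
    | _ => cOracle
    end
  end.
Definition decode (n : nat) : code := decode_aux n n.

(* Unrelativized computation: the oracle is the (recursive) constant-0 function,
   so the functions computed are exactly the partial recursive functions. *)
Definition eval0 (c : code) (x y : nat) : Prop := eval (fun _ => 0) c x y.

Definition phi (e x y : nat) : Prop := eval0 (decode e) x y.

Definition recursive (f : nat -> nat) : Prop :=
  exists c : code, forall n, eval0 c n (f n).

Definition Tcomputes (g f : nat -> nat) : Prop :=
  exists c : code, forall n, eval g c n (f n).

Definition DNR (f : nat -> nat) : Prop :=
  forall e y, phi e e y -> f e <> y.

Definition SNPR (f : nat -> nat) : Prop :=
  forall e, exists N, forall n y, N <= n -> phi e n y -> f n <> y.

Definition order_fun (h : nat -> nat) : Prop :=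
  recursive h /\
  (forall m n, m <= n -> h m <= h n) /\
  (forall k, exists n, k <= h n) /\
  2 <= h 0.

Definition bounded_by (h f : nat -> nat) : Prop := forall n, f n < h n.

From Stdlib Require Import Arith Cantor Lia.

(* Let [f' n] code the tuple of the values of [f] at the indices [E n j], j < n,
   where [E n j] is an index of the program x |-> (component n-1-j of phi_j(n)).
   If phi_e(n) = f'(n) with e < n, then the program [E n e] on its own index
   outputs the component of f'(n) that is f(E n e), contradicting DNR.  Since
   pairing is monotone, f' is bounded by the code of the tuple of g-values, and a
   recursive nondecreasing majorant of that is the order function h. *)

Lemma pr_p1_p2 n : pr (p1 n) (p2 n) = n.
Proof. unfold pr, p1, p2. rewrite <- surjective_pairing. apply cancel_to_of. Qed.

Lemma p1_pr a b : p1 (pr a b) = a.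
Proof. unfold pr, p1. now rewrite cancel_of_to. Qed.

Lemma p2_pr a b : p2 (pr a b) = b.
Proof. unfold pr, p2. now rewrite cancel_of_to. Qed.

Lemma p1_p2_le n : p1 n + p2 n <= n.
Proof.
  rewrite <- (pr_p1_p2 n) at 3. unfold pr.
  pose proof (to_nat_non_decreasing (p1 n) (p2 n)). lia.
Qed.

Lemma le_pr a b : a <= pr a b /\ b <= pr a b.
Proof. unfold pr. pose proof (to_nat_non_decreasing a b). lia. Qed.

Lemma pr_le_mono a b a' b' : a <= a' -> b <= b' -> pr a b <= pr a' b'.
Proof.
  intros. unfold pr. apply (Nat.mul_le_mono_pos_r _ _ 2); [lia|].
  rewrite !to_nat_spec. nia.
Qed.

Section Computable.
Variable O : nat -> nat.

Definition computable (F : nat -> nat) : Prop :=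
  exists c, forall n, eval O c n (F n).

Lemma computable_ext F G : (forall n, F n = G n) -> computable F -> computable G.
Proof. intros FG [c Hc]. exists c. intro n. rewrite <- FG. apply Hc. Qed.

Lemma computable_id : computable (fun n => n).
Proof.
  exists (cPair cFst cSnd). intro n. rewrite <- (pr_p1_p2 n) at 2.
  constructor; constructor.
Qed.

Lemma computable_const k : computable (fun _ => k).
Proof.
  induction k as [|k [c Hc]].
  - exists cZero. constructor.
  - exists (cComp cSucc c). intro n. econstructor; [apply Hc | constructor].
Qed.

Lemma computable_comp F A : computable F -> computable A -> computable (fun n => F (A n)).
Proof. intros [f Hf] [a Ha]. exists (cComp f a). intro; econstructor; eauto. Qed.

Lemma computable_pair A B : computable A -> computable B -> computable (fun n => pr (A n) (B n)).
Proof. intros [a Ha] [b Hb]. exists (cPair a b). intro; econstructor; eauto. Qed.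

Lemma computable_p1 A : computable A -> computable (fun n => p1 (A n)).
Proof. apply (computable_comp p1). exists cFst. constructor. Qed.

Lemma computable_p2 A : computable A -> computable (fun n => p2 (A n)).
Proof. apply (computable_comp p2). exists cSnd. constructor. Qed.

Lemma computable_S A : computable A -> computable (fun n => S (A n)).
Proof. apply (computable_comp S). exists cSucc. constructor. Qed.

Lemma computable_oracle : computable O.
Proof. exists cOracle. constructor. Qed.

Lemma computable_app2 F A B :
  computable (fun z => F (p1 z) (p2 z)) -> computable A -> computable B ->
  computable (fun n => F (A n) (B n)).
Proof.
  intros HF HA HB. eapply computable_ext; [|exact (computable_comp _ _ HF (computable_pair _ _ HA HB))].
  intro n. cbn beta. now rewrite p1_pr, p2_pr.
Qed.

Lemma computable_prim_rec2 (F : nat -> nat -> nat) B St :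
  (forall x, F x 0 = B x) -> (forall x n, F x (S n) = St (pr x (pr n (F x n)))) ->
  computable B -> computable St -> computable (fun z => F (p1 z) (p2 z)).
Proof.
  intros F0 FS [cb Hb] [cs Hs]. exists (cRec cb cs).
  assert (HF : forall x n, eval O (cRec cb cs) (pr x n) (F x n)).
  { intros x n; induction n as [|n IH].
    - rewrite F0. constructor. apply Hb.
    - rewrite FS. econstructor; [apply IH | apply Hs]. }
  intro z. rewrite <- (pr_p1_p2 z) at 1. apply HF.
Qed.

Lemma computable_prim_rec (F : nat -> nat) St :
  (forall n, F (S n) = St (pr n (F n))) -> computable St -> computable F.
Proof.
  intros FS HSt.
  assert (H2 : computable (fun z => (fun _ n => F n) (p1 z) (p2 z))).
  { apply (computable_prim_rec2 (fun _ n => F n) (fun _ => F 0) (fun z => St (p2 z))); auto.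
    - intros; now rewrite p2_pr.
    - apply computable_const.
    - apply (computable_comp St); auto. apply computable_p2, computable_id. }
  exact (computable_app2 (fun _ n => F n) _ _ H2 (computable_const 0) computable_id).
Qed.

Lemma computable_add A B : computable A -> computable B -> computable (fun n => A n + B n).
Proof.
  intros HA HB. apply (computable_app2 Nat.add); auto.
  apply (computable_prim_rec2 _ (fun x => x) (fun z => S (p2 (p2 z)))).
  - intro; lia.
  - intros; rewrite !p2_pr; lia.
  - apply computable_id.
  - apply computable_S, computable_p2, computable_p2, computable_id.
Qed.

Lemma computable_mul A B : computable A -> computable B -> computable (fun n => A n * B n).
Proof.
  intros HA HB. apply (computable_app2 Nat.mul); auto.
  apply (computable_prim_rec2 _ (fun _ => 0) (fun z => p2 (p2 z) + p1 z)).
  - intro; lia.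
  - intros; rewrite !p2_pr, p1_pr; lia.
  - apply computable_const.
  - apply computable_add.
    + apply computable_p2, computable_p2, computable_id.
    + apply computable_p1, computable_id.
Qed.

Lemma computable_pred A : computable A -> computable (fun n => pred (A n)).
Proof.
  apply (computable_comp pred).
  apply (computable_prim_rec _ p1); [intros; now rewrite p1_pr|].
  apply computable_p1, computable_id.
Qed.

Lemma computable_sub A B : computable A -> computable B -> computable (fun n => A n - B n).
Proof.
  intros HA HB. apply (computable_app2 Nat.sub); auto.
  apply (computable_prim_rec2 _ (fun x => x) (fun z => pred (p2 (p2 z)))).
  - intro; lia.
  - intros; rewrite !p2_pr; lia.
  - apply computable_id.
  - apply computable_pred, computable_p2, computable_p2, computable_id.
Qed.

End Computable.

Ltac computable_step := match goal with
  | |- computable _ (fun n => n) => apply computable_id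
  | |- computable _ p1 => apply (computable_p1 _ (fun n => n)), computable_id
  | |- computable _ p2 => apply (computable_p2 _ (fun n => n)), computable_id
  | |- computable _ (fun n => pr _ _) => apply computable_pair
  | |- computable _ (fun n => p1 _) => apply computable_p1
  | |- computable _ (fun n => p2 _) => apply computable_p2
  | |- computable _ (fun n => _ + _) => apply computable_add
  | |- computable _ (fun n => _ * _) => apply computable_mul
  | |- computable _ (fun n => _ - _) => apply computable_sub
  | |- computable _ (fun n => S _) => apply computable_S
  | |- computable _ (fun n => _) => apply computable_const
  | _ => assumption
  end.
Ltac computable_auto := repeat computable_step.

Lemma decode_aux_stable k k' n : n <= k -> n <= k' -> decode_aux k n = decode_aux k' n.
Proof.
  revert k' n. induction k as [|k IH]; intros k' n Hk Hk'.
  - replace n with 0 by lia. now destruct k'.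
  - destruct k' as [|k']; [now replace n with 0 by lia|].
    destruct (Nat.eq_dec n 0) as [->|n_pos]; [reflexivity|].
    assert (n / 9 < n) by (apply Nat.div_lt; lia).
    pose proof (p1_p2_le (n / 9)).
    cbn [decode_aux].
    rewrite (IH k' (p1 (n / 9))), (IH k' (p2 (n / 9))), (IH k' (n / 9)) by lia.
    reflexivity.
Qed.

Definition code_comp (a b : nat) : nat := 9 * pr a b + 5.

Lemma decode_code_comp a b : decode (code_comp a b) = cComp (decode a) (decode b).
Proof.
  destruct (le_pr a b) as [Ha Hb].
  assert (Hdiv : code_comp a b / 9 = pr a b).
  { unfold code_comp. rewrite (Nat.mul_comm 9), Nat.div_add_l, Nat.div_small; lia. }
  assert (Hmod : code_comp a b mod 9 = 5).
  { unfold code_comp. rewrite Nat.add_comm, (Nat.mul_comm 9), Nat.Div0.mod_add.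
    apply Nat.mod_small; lia. }
  unfold decode at 1. remember (code_comp a b) as N eqn:HN.
  destruct N as [|k]; [unfold code_comp in HN; lia|].
  cbn [decode_aux]. rewrite Hdiv, Hmod, p1_pr, p2_pr.
  unfold decode. rewrite (decode_aux_stable k a a), (decode_aux_stable k b b)
    by (unfold code_comp in HN; lia).
  reflexivity.
Qed.

(* [decode 1 = cSucc], [decode 2 = cFst], [decode 3 = cSnd]. *)
Fixpoint const_index (n : nat) : nat :=
  match n with 0 => 0 | S n => code_comp 1 (const_index n) end.

Definition proj (d t : nat) : nat := p1 (Nat.iter d p2 t).

Fixpoint proj_index (d : nat) : nat :=
  match d with 0 => 2 | S d => code_comp (proj_index d) 3 end.

Definition diag_index (n j : nat) : nat :=
  code_comp (proj_index (n - 1 - j)) (code_comp j (const_index n)).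

Lemma eval_const_index O n x : eval O (decode (const_index n)) x n.
Proof.
  induction n as [|n IH]; [constructor|].
  cbn [const_index]. rewrite decode_code_comp. econstructor; [apply IH | constructor].
Qed.

Lemma eval_proj_index O d x : eval O (decode (proj_index d)) x (proj d x).
Proof.
  revert x. induction d as [|d IH]; intro x; [constructor|].
  cbn [proj_index]. rewrite decode_code_comp. unfold proj. rewrite Nat.iter_succ_r.
  econstructor; [constructor | apply IH].
Qed.

Lemma phi_diag_index e n x y : phi e n y -> phi (diag_index n e) x (proj (n - 1 - e) y).
Proof.
  intro Hy. unfold phi, eval0, diag_index. rewrite !decode_code_comp.
  econstructor; [|apply eval_proj_index].
  econstructor; [apply eval_const_index | exact Hy].
Qed.

Lemma computable_diag_index O : computable O (fun z => diag_index (p1 z) (p2 z)).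
Proof.
  assert (Hconst : computable O const_index).
  { apply (computable_prim_rec O _ (fun z => code_comp 1 (p2 z))).
    - intros; now rewrite p2_pr.
    - unfold code_comp. computable_auto. }
  assert (Hproj : computable O proj_index).
  { apply (computable_prim_rec O _ (fun z => code_comp (p2 z) 3)).
    - intros; now rewrite p2_pr.
    - unfold code_comp. computable_auto. }
  unfold diag_index, code_comp. computable_auto.
  - apply (computable_comp O proj_index); computable_auto.
  - apply (computable_comp O const_index); computable_auto.
Qed.

Fixpoint tuple (a : nat -> nat) (m : nat) : nat :=
  match m with 0 => 0 | S m => pr (a m) (tuple a m) end.

Lemma proj_tuple a m d : d < m -> proj d (tuple a m) = a (m - 1 - d).
Proof.
  revert d. induction m as [|m IH]; intros d Hd; [lia|]. cbn [tuple].
  destruct d as [|d].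
  - unfold proj. simpl Nat.iter. rewrite p1_pr. f_equal. lia.
  - unfold proj. rewrite Nat.iter_succ_r, p2_pr. replace (S m - 1 - S d) with (m - 1 - d) by lia.
    apply IH. lia.
Qed.

Lemma tuple_le_mono a b m : (forall j, a j <= b j) -> tuple a m <= tuple b m.
Proof. intro ab. induction m; cbn [tuple]; auto using pr_le_mono. Qed.

Lemma computable_tuple O (a : nat -> nat -> nat) :
  computable O (fun z => a (p1 z) (p2 z)) -> computable O (fun n => tuple (a n) n).
Proof.
  intro Ha.
  assert (Ht : computable O (fun z => tuple (a (p1 z)) (p2 z))).
  { apply (computable_prim_rec2 O (fun x => tuple (a x)) (fun _ => 0)
      (fun z => pr (a (p1 z) (p1 (p2 z))) (p2 (p2 z)))).
    - reflexivity.
    - intros; cbn [tuple]; now rewrite !p2_pr, !p1_pr.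
    - apply computable_const.
    - computable_auto. apply (computable_app2 O a); computable_auto. }
  exact (computable_app2 O (fun x => tuple (a x)) _ _ Ht (computable_id O) (computable_id O)).
Qed.

Definition diag_tuple (F : nat -> nat) (n : nat) : nat :=
  tuple (fun j => F (diag_index n j)) n.

Lemma SNPR_diag_tuple F : DNR F -> SNPR (diag_tuple F).
Proof.
  intros F_dnr e. exists (S e). intros n y Hn Hy Fy.
  apply (F_dnr _ _ (phi_diag_index e n (diag_index n e) y Hy)).
  rewrite <- Fy. unfold diag_tuple. rewrite proj_tuple by lia.
  do 2 f_equal. lia.
Qed.

Lemma computable_diag_tuple O F : computable O F -> computable O (diag_tuple F).
Proof.
  intro HF. apply (computable_tuple O (fun n j => F (diag_index n j))).
  apply (computable_comp O F); auto using computable_diag_index.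
Qed.

Fixpoint majorant (b : nat -> nat) (n : nat) : nat :=
  match n with 0 => b 0 + 2 | S m => majorant b m + b (S m) + 1 end.

Lemma lt_majorant b n : b n < majorant b n.
Proof. destruct n; cbn; lia. Qed.

Lemma order_fun_majorant b : recursive b -> order_fun (majorant b).
Proof.
  intro b_rec.
  assert (step : forall n, majorant b n <= majorant b (S n)) by (intro; cbn; lia).
  split; [|split; [|split]].
  - apply (computable_prim_rec _ _ (fun z => p2 z + b (S (p1 z)) + 1)).
    + intros; cbn [majorant]. now rewrite p2_pr, p1_pr.
    + computable_auto. apply (computable_comp _ b); [exact b_rec | computable_auto].
  - intros m n mn. induction mn; [lia | eauto using Nat.le_trans].
  - intro k. exists k. induction k; cbn; lia.
  - cbn; lia.
Qed.

Theorem mainTheorem2 :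
  forall g : nat -> nat, order_fun g ->
  exists h : nat -> nat, order_fun h /\
    forall f : nat -> nat, DNR f -> bounded_by g f ->
      exists f' : nat -> nat, SNPR f' /\ bounded_by h f' /\ Tcomputes f f'.
Proof.
  intros g [g_rec _].
  exists (majorant (diag_tuple g)). split.
  { apply order_fun_majorant, computable_diag_tuple. exact g_rec. }
  intros f f_dnr f_lt_g. exists (diag_tuple f). split; [|split].
  - exact (SNPR_diag_tuple f f_dnr).
  - intro n. apply (Nat.le_lt_trans _ (diag_tuple g n)); [|apply lt_majorant].
    apply tuple_le_mono. intro j. apply Nat.lt_le_incl, f_lt_g.
  - exact (computable_diag_tuple f f (computable_oracle f)).
Qed.
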